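(* Let $\mathfrak{g}$ be a filiform Lie algebra of dimension $n$ over a field $K$ of characteristic zero, with adapted basis $\{e_1,\dots,e_n\}$ and $\mathfrak{g}_i=\langle e_i,\dots,e_n\rangle$. Suppose $[\mathfrak{g}_k,\mathfrak{g}_k]=0$ for some $k\ge2$. Then $\chi(\mathfrak{g})\ge n-2(k-1)$.
   Context: A filiform Lie algebra of dimension $n$ is a nilpotent Lie algebra with $\dim\mathfrak{g}^k=n-k$ for $2\le k\le n$ (lower central series $\mathfrak{g}^1=\mathfrak{g}$, $\mathfrak{g}^{k+1}=[\mathfrak{g},\mathfrak{g}^k]$). An adapted basis is a basis $\{e_1,\dots,e_n\}$ with $[e_1,e_i]=e_{i+1}$ ($2\le i\le n-1$), $[e_1,e_n]=0$, $[e_2,e_3]\in\langle e_5,\dots,e_n\rangle$; such bases exist. For $\ell\in\mathfrak{g}^*$, $\mathfrak{g}(\ell)=\{y\in\mathfrak{g}\mid\ell([x,y])=0\ \forall x\in\mathfrak{g}\}$ and $\chi(\mathfrak{g})=\min_{\ell\in\mathfrak{g}^*}\dim\mathfrak{g}(\ell)$. *)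

From HB Require Import structures.
From mathcomp Require Import all_boot all_order all_algebra.
Set Implicit Arguments.
Unset Strict Implicit.
Unset Printing Implicit Defensive.
Import GRing.Theory.
Local Open Scope ring_scope.

Section Lie.
Variables (K : fieldType) (vT : vectType K).

Definition is_lie_bracket (br : vT -> vT -> vT) : Prop :=
  [/\ (forall (a : K) (x y z : vT), br (a *: x + y) z = a *: br x z + br y z),
      (forall (a : K) (x y z : vT), br x (a *: y + z) = a *: br x y + br x z),
      (forall x : vT, br x x = 0) &
      (forall x y z : vT, br x (br y z) + br y (br z x) + br z (br x y) = 0)].

(* [A, B] : the subspace spanned by all brackets [x, y], x in A, y in B
   (by bilinearity it is spanned by the brackets of basis vectors). *)
Definition lie_comm (br : vT -> vT -> vT) (A B : {vspace vT}) : {vspace vT} :=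
  (<< [seq br x y | x <- vbasis A, y <- vbasis B] >>)%VS.

Definition lcs (br : vT -> vT -> vT) (k : nat) : {vspace vT} :=
  iter k.-1 (fun A => lie_comm br fullv A) fullv.

Definition filiform (br : vT -> vT -> vT) (n : nat) : Prop :=
  [/\ \dim (fullv : {vspace vT}) = n,
      (exists m, lcs br m = 0%VS) &
      (forall k, (2 <= k <= n)%N -> \dim (lcs br k) = (n - k)%N)].

(* adapted basis e_1, ..., e_n (indexed 1..n) *)
Definition span_from (e : nat -> vT) (n i : nat) : {vspace vT} :=
  (<< [seq e j | j <- iota i (n.+1 - i)] >>)%VS.

Definition adapted_basis (br : vT -> vT -> vT) (n : nat) (e : nat -> vT) : Prop :=
  [/\ basis_of fullv [seq e i | i <- iota 1 n],
      (forall i, (2 <= i <= n.-1)%N -> br (e 1%N) (e i) = e i.+1),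
      br (e 1%N) (e n) = 0 &
      br (e 2%N) (e 3%N) \in span_from e n 5].

Definition stabilizer (br : vT -> vT -> vT) (l : 'Hom(vT, K^o)) : {vspace vT} :=
  lker (linfun (fun y : vT => (linfun (fun x : vT => l (br x y)) : 'Hom(vT, K^o)))).

End Lie.

From HB Require Import structures.
From mathcomp Require Import all_boot all_order all_algebra.
From mathcomp Require Import zify.

Set Implicit Arguments.
Unset Strict Implicit.
Unset Printing Implicit Defensive.
Import GRing.Theory.
Local Open Scope ring_scope.

(* The ideal A = g_k is abelian and g = <e_1, ..., e_(k-1)> + A, so
   dim A >= n - (k - 1).  For y in A, l([x, y]) vanishes automatically for
   x in A, hence y lies in g(l) as soon as the k - 1 linear conditions
   l([e_i, y]) = 0, i < k, hold.  These cut A down by at most k - 1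
   dimensions, so dim g(l) >= dim A - (k - 1) >= n - 2 (k - 1). *)

Lemma lfunE_linear (K : fieldType) (aT rT : vectType K) (f : aT -> rT) :
  linear f -> linfun f =1 f.
Proof.
move=> fL u.
pose ff : {linear aT -> rT} := HB.pack f (GRing.isLinear.Build K aT rT *:%R f fL).
exact: (lfunE ff u).
Qed.

Lemma span_from_split (K : fieldType) (vT : vectType K) (e : nat -> vT)
    (n i j : nat) :
  (i <= j <= n.+1)%N ->
  span_from e n i = (<<[seq e m | m <- iota i (j - i)]>> + span_from e n j)%VS.
Proof.
move=> /andP[ij jn]; rewrite /span_from.
have -> : (n.+1 - i = (j - i) + (n.+1 - j))%N by lia.
by rewrite iotaD subnKC // map_cat span_cat.
Qed.

Section BilinearBracket.
Variables (K : fieldType) (vT : vectType K) (br : vT -> vT -> vT).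
Hypothesis br_linearl :
  forall (a : K) (x y z : vT), br (a *: x + y) z = a *: br x z + br y z.
Hypothesis br_linearr :
  forall (a : K) (x y z : vT), br x (a *: y + z) = a *: br x y + br x z.

Lemma linear_brl (y : vT) : linear (br^~ y).
Proof. by move=> a u v; rewrite br_linearl. Qed.

Lemma linear_brr (x : vT) : linear (br x).
Proof. by move=> a u v; rewrite br_linearr. Qed.

Lemma linear_form_brl (l : 'Hom(vT, K^o)) (y : vT) :
  linear (fun x => l (br x y) : K^o).
Proof. by move=> a u v; rewrite br_linearl linearD linearZ. Qed.

Lemma memv_lie_comm (A B : {vspace vT}) (x y : vT) :
  x \in A -> y \in B -> br x y \in lie_comm br A B.
Proof.
move=> xA yB; set C := lie_comm br A B.
have brr_basis b : b \in vbasis A -> (B <= linfun (br b) @^-1: C)%VS.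
  move=> bA; rewrite -(span_basis (vbasisP B)); apply/span_subvP => b' b'B.
  rewrite -memv_preim lfunE_linear; last exact: linear_brr.
  by apply: memv_span; apply: allpairs_f.
have : (A <= linfun (br^~ y) @^-1: C)%VS.
  rewrite -(span_basis (vbasisP A)); apply/span_subvP => b bA.
  rewrite -memv_preim lfunE_linear; last exact: linear_brl.
  have := subvP (brr_basis b bA) y yB.
  by rewrite -memv_preim lfunE_linear //; apply: linear_brr.
by move/subvP/(_ x xA); rewrite -memv_preim lfunE_linear //; apply: linear_brl.
Qed.

Lemma stabilizerP (l : 'Hom(vT, K^o)) (y : vT) :
  reflect (forall x, l (br x y) = 0) (y \in stabilizer br l).
Proof.
have linear_brr_form : linear (fun y => linfun (fun x => l (br x y) : K^o)).
  move=> a u v; apply/lfunP => x.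
  rewrite add_lfunE scale_lfunE !lfunE_linear ?br_linearr ?linearD ?linearZ //;
    exact: linear_form_brl.
rewrite /stabilizer memv_ker lfunE_linear //.
apply: (iffP eqP) => [y0 x | y0].
  by rewrite -(lfunE_linear (linear_form_brl l y)) y0 zero_lfunE.
by apply/lfunP => x; rewrite zero_lfunE lfunE_linear ?y0 //; apply: linear_form_brl.
Qed.

(* The kernel of y |-> (l([s, y]))_(s in S) on A lies in g(l). *)
Lemma dim_stabilizer_ge (l : 'Hom(vT, K^o)) (S : seq vT) (A : {vspace vT}) :
  (<<S>> + A = fullv)%VS ->
  {in A &, forall x y, l (br x y) = 0} ->
  (\dim A - size S <= \dim (stabilizer br l))%N.
Proof.
move=> gSA A_isotropic.
pose g y : 'rV[K]_(size S) := \row_(i < size S) l (br S`_i y).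
have g_linear : linear g.
  by move=> a u v; apply/rowP => i; rewrite !mxE br_linearr linearD linearZ.
pose G := linfun g.
have ker_sub : (A :&: lker G <= stabilizer br l)%VS.
  apply/subvP => y /memv_capP[yA]; rewrite memv_ker lfunE_linear // => /eqP gy0.
  apply/stabilizerP => x.
  have lbr_linear := linear_form_brl l y.
  suff : x \in lker (linfun (fun x => l (br x y) : K^o)).
    by rewrite memv_ker lfunE_linear // => /eqP.
  apply: subvP (memvf x); rewrite -gSA subv_add; apply/andP; split.
    apply/span_subvP => s sS; rewrite memv_ker lfunE_linear //.
    have s_idx : (index s S < size S)%N by rewrite index_mem.
    move/rowP/(_ (Ordinal s_idx)): gy0.
    by rewrite !mxE /= nth_index // => ->.
  by apply/subvP => x' x'A; rewrite memv_ker lfunE_linear // A_isotropic.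
have dim_img : (\dim (G @: A) <= size S)%N.
  by rewrite (leq_trans (dimvS (subvf _))) // dimvf /dim /= mul1n.
have := limg_ker_dim G A; have := dimvS ker_sub; lia.
Qed.

End BilinearBracket.

Theorem theorem6p4 (K : fieldType) (vT : vectType K) (br : vT -> vT -> vT)
  (n : nat) (e : nat -> vT) (k : nat) :
  [pchar K] =i pred0 ->
  is_lie_bracket br ->
  filiform br n ->
  adapted_basis br n e ->
  (2 <= k)%N ->
  lie_comm br (span_from e n k) (span_from e n k) = 0%VS ->
  forall l : 'Hom(vT, K^o), (n - 2 * (k - 1) <= \dim (stabilizer br l))%N.
Proof.
move=> _ [brl brr _ _] [dim_g _ _] [basis_e _ _ _] k_ge2 abelian l.
have [k_le|k_gt] := leqP k n.+1; last by have -> : (n - 2 * (k - 1) = 0)%N by lia.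
set A := span_from e n k; set S := [seq e m | m <- iota 1 (k - 1)].
have gSA : (<<S>> + A = fullv)%VS.
  have /andP[/eqP span_e _] := basis_e.
  have <- : span_from e n 1 = fullv by rewrite /span_from subn1 span_e.
  by rewrite (span_from_split e (i := 1) (j := k)) // k_le (ltnW k_ge2).
have dim_A : (n <= (k - 1) + \dim A)%N.
  rewrite -dim_g -gSA (leq_trans (dimv_add_leqif _ _)) // leq_add2r.
  by rewrite (leq_trans (dim_span _)) // size_map size_iota.
have A_isotropic : {in A &, forall x y, l (br x y) = 0}.
  move=> x y xA yA; have := memv_lie_comm brl brr xA yA.
  by rewrite abelian memv0 => /eqP ->; rewrite linear0.
have := dim_stabilizer_ge brl brr gSA A_isotropic.
rewrite size_map size_iota => dim_stab; apply: leq_trans dim_stab.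
by rewrite mul2n -addnn subnDA leq_sub2r // leq_subLR.
Qed.
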